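(* Let $w(x,y)=x^{a_1}y^{b_1}\cdots x^{a_k}y^{b_k}\in F_2$ with $k\ge1$ and all integers $a_i\neq0$, $b_i\neq0$. If all $b_i$ are negative, then either the word map $w:\mathrm{SL}(2,\mathbb{C})^2\to\mathrm{SL}(2,\mathbb{C})$ is surjective, or $w=v^2$ for some word $v\neq\mathrm{id}$.
   Context: The word map sends $(X,Y)$ to $X^{a_1}Y^{b_1}\cdots X^{a_k}Y^{b_k}$. *)

From mathcomp Require Import all_boot all_algebra.
From mathcomp Require Import complex.
From mathcomp Require Import reals Rstruct.
Set Implicit Arguments. Unset Strict Implicit. Unset Printing Implicit Defensive.
Import GRing.Theory Num.Theory.
Local Open Scope ring_scope.

Definition CC : Type := complex Rdefinitions.R.

Definition SL2 (M : 'M[CC]_2) : Prop := \det M = 1.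

Definition word_map (k : nat) (a b : 'I_k -> int) (X Y : 'M[CC]_2) : 'M[CC]_2 :=
  \prod_(i < k) (X ^ a i * Y ^ b i).

(* The free group F_2 on x, y, as words in letters.  A letter is a pair
   (is_y, is_inverse): (false,false) = x, (false,true) = x^-1,
   (true,false) = y, (true,true) = y^-1. *)
Definition letter := (bool * bool)%type.

Definition push (l : letter) (s : seq letter) : seq letter :=
  match s with
  | l' :: s' => if (l'.1 == l.1) && (l'.2 != l.2) then s' else l :: s
  | [::] => [:: l]
  end.
Definition reduce (s : seq letter) : seq letter := foldr push [::] s.

Definition F2eq (s t : seq letter) : Prop := reduce s = reduce t.

Definition gen_pow (is_y : bool) (e : int) : seq letter :=
  nseq `|e|%N (is_y, e < 0).

Definition word_of (k : nat) (a b : 'I_k -> int) : seq letter :=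
  flatten [seq gen_pow false (a i) ++ gen_pow true (b i) | i <- enum 'I_k].

From mathcomp Require Import all_boot all_order all_algebra.
From mathcomp Require Import complex reals Rstruct.
From mathcomp Require Import cyclic separable cyclotomic.
From mathcomp Require Import ring zify.
Set Implicit Arguments. Unset Strict Implicit. Unset Printing Implicit Defensive.
Import Order.TTheory GRing.Theory Num.Theory.
Local Open Scope ring_scope.

(* Since all b_i are negative, w = prod_(g in G) x^g y^-1 for an explicit
   exponent sequence G.  The image of the word map is closed under
   conjugation, and every element of SL(2, C) is conjugate to an upper
   triangular [[lam, b], [0, lam^-1]].  Evaluated at X = diag(al, al^-1) and
   Y = [[mu, y], [0, mu^-1]], the word is upper triangular with diagonal entry
   al^(sum G) mu^(-|G|) and an upper-right entry that is linear in y, with a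
   coefficient P(al^2, mu^2) depending only on G; so [[lam, b], [0, lam^-1]]
   is reached as soon as the diagonal entry is lam and P <> 0.  When lam^2 <> 1
   one conjugates further to a diagonal matrix.  When lam = +-1, al and mu can
   be taken in {1, -1} unless lam = -1 while |G| = 2n and sum G = 2h are both
   even.  Then take al = 2 and mu^2 = s with s^n = -4^h: if P vanished at all
   n such s, a polynomial of degree < n built from the two halves G1, G2 of G
   would vanish, and comparing its coefficients (powers of 4) gives G1 = G2,
   i.e. w = v^2. *)

Definition word_yinv (R : unitRingType) (G : seq int) (X Y : R) : R :=
  \prod_(g <- G) (X ^ g * Y^-1).

Lemma exprz_double (R : unitRingType) (x : R) (m : int) : x ^ (m + m) = (x ^+ 2) ^ m.
Proof. by rewrite exprnP exprz_exp; congr (_ ^ _); lia. Qed.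

Section Conjugation.
Variables (R : unitRingType) (Q : R).
Hypothesis uQ : Q \is a GRing.unit.

Lemma invr_conj (X : R) : X \is a GRing.unit ->
  (Q * X * Q^-1)^-1 = Q * X^-1 * Q^-1.
Proof. by move=> uX; rewrite !invrM ?unitrV ?unitrMr // invrK mulrA. Qed.

Lemma exprz_conj (X : R) (z : int) : X \is a GRing.unit ->
  (Q * X * Q^-1) ^ z = Q * X ^ z * Q^-1.
Proof.
move=> uX; have exprn_conj (Z : R) n : (Q * Z * Q^-1) ^+ n = Q * Z ^+ n * Q^-1.
  elim: n => [|n IHn]; first by rewrite !expr0 mulr1 divrr.
  by rewrite exprS IHn !mulrA divrK // exprS !mulrA.
case: z => n; first by rewrite -!exprnP exprn_conj.
by rewrite !NegzE -!exprz_inv -!exprnP invr_conj // exprn_conj.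
Qed.

Lemma word_yinv_conj G (X Y : R) : X \is a GRing.unit -> Y \is a GRing.unit ->
  word_yinv G (Q * X * Q^-1) (Q * Y * Q^-1) = Q * word_yinv G X Y * Q^-1.
Proof.
move=> uX uY; elim: G => [|g G IHG]; first by rewrite /word_yinv !big_nil mulr1 divrr.
rewrite /word_yinv !big_cons -!/(word_yinv G _ _) IHG exprz_conj //.
by rewrite invr_conj // !mulrA !divrK.
Qed.

End Conjugation.

Lemma det_mx22 (R : comNzRingType) (M : 'M[R]_2) :
  \det M = M 0 0 * M 1 1 - M 0 1 * M 1 0.
Proof.
rewrite (expand_det_row _ 0) !big_ord_recl big_ord0 addr0 /cofactor !det_mx11 !mxE /=.
rewrite expr0 expr1 mul1r mulN1r mulrN.
by congr (_ * M _ _ - _ * M _ _); try congr (M _ _); apply: val_inj.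
Qed.

Section UpperTriangular.
Context {F : fieldType}.

Definition uptri (a b : F) : 'M[F]_2 :=
  \matrix_(i, j) if i == 0 :> nat then (if j == 0 :> nat then a else b)
                 else (if j == 0 :> nat then 0 else a^-1).

Lemma uptriM a b c d : uptri a b * uptri c d = uptri (a * c) (a * d + b / c).
Proof.
apply/matrixP => i j; rewrite -mulmxE !mxE !big_ord_recl big_ord0 !mxE /=.
case: i => [[|[|//]] ?]; case: j => [[|[|//]] ?] /=;
  by rewrite ?mulr0 ?mul0r ?addr0 ?add0r ?invfM.
Qed.

Lemma uptri10 : uptri 1 0 = 1.
Proof.
apply/matrixP => i j; rewrite !mxE /=.
by case: i => [[|[|//]] ?]; case: j => [[|[|//]] ?] //=; rewrite invr1.
Qed.

Lemma det_uptri a b : a != 0 -> \det (uptri a b) = 1.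
Proof. by move=> a0; rewrite det_mx22 !mxE /= mulr0 subr0 divff. Qed.

Lemma uptri_unit a b : a != 0 -> uptri a b \is a GRing.unit.
Proof. by move=> a0; rewrite unitmxE det_uptri // unitr1. Qed.

Lemma uptriV a b : a != 0 -> (uptri a b)^-1 = uptri a^-1 (- b).
Proof.
move=> a0; apply: (mulrI (uptri_unit b a0)); rewrite divrr ?uptri_unit // uptriM.
by rewrite divff // invrK mulrN mulrC addNr uptri10.
Qed.

Lemma uptri_expz a (z : int) : a != 0 -> uptri a 0 ^ z = uptri (a ^ z) 0.
Proof.
have uptri_expn c n : uptri c 0 ^+ n = uptri (c ^+ n) 0.
  elim: n => [|n IHn]; first by rewrite expr0 uptri10.
  by rewrite exprS IHn uptriM mulr0 mul0r addr0 exprS.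
move=> a0; case: z => n; first by rewrite -!exprnP uptri_expn.
by rewrite !NegzE -!exprz_inv uptriV // oppr0 -!exprnP uptri_expn.
Qed.

Definition word_diag (al mu : F) (G : seq int) : F :=
  al ^ (\sum_(g <- G) g) * mu ^ (- (size G)%:Z).

Definition word_coef (r s : F) (G : seq int) : F :=
  foldr (fun g p => r ^ g * (1 + s^-1 * p)) 0 G.

Lemma word_diag_cons al mu g G : al != 0 -> mu != 0 ->
  word_diag al mu (g :: G) = al ^ g * mu^-1 * word_diag al mu G.
Proof.
move=> al0 mu0; rewrite /word_diag big_cons /= intS opprD.
rewrite !exprzDr ?unitfE // -(exprz_inv _ 1) expr1z; ring.
Qed.

Lemma word_diag_neq0 al mu G : al != 0 -> mu != 0 -> word_diag al mu G != 0.
Proof. by move=> al0 mu0; rewrite mulf_neq0 ?expfz_neq0. Qed.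

Lemma word_coef_cat r s G1 G2 : r != 0 -> s != 0 ->
  word_coef r s (G1 ++ G2) = word_coef r s G1 + word_diag r s G1 * word_coef r s G2.
Proof.
move=> r0 s0; elim: G1 => [|g G IHG] /=.
  by rewrite /word_diag big_nil expr0z oppr0 expr0z !mul1r add0r.
rewrite IHG word_diag_cons //; ring.
Qed.

Lemma word_coef11 G : word_coef 1 1 G = (size G)%:R.
Proof.
elim: G => [|g G IHG] //=.
by rewrite IHG exp1rz invr1 !mul1r -natr1 addrC.
Qed.

Lemma word_yinv_uptri al mu y G : al != 0 -> mu != 0 ->
  word_yinv G (uptri al 0) (uptri mu y) =
  uptri (word_diag al mu G)
        (- y * mu^-1 * (word_diag al mu G)^-1 * word_coef (al ^+ 2) (mu ^+ 2) G).
Proof.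
move=> al0 mu0; elim: G => [|g G IHG].
  by rewrite /word_yinv big_nil /= mulr0 /word_diag big_nil expr0z oppr0 expr0z mulr1 uptri10.
rewrite /word_yinv big_cons -/(word_yinv G _ _) IHG uptri_expz // uptriV // !uptriM.
rewrite mul0r addr0 word_diag_cons //=; congr (uptri _ _).
have g0 : al ^ g != 0 by rewrite expfz_neq0.
rewrite -exprz_double expfzDr // !invfM invrK; field.
by rewrite mu0 g0 !expfz_neq0.
Qed.

End UpperTriangular.

Section WordPoly.
Context {F : fieldType}.

Fixpoint word_poly (r : F) (G : seq int) : {poly F} :=
  if G is g :: G' then r ^ g *: ('X^(size G') + word_poly r G') else 0.

Lemma size_word_poly r G : (size (word_poly r G) <= size G)%N.
Proof.
elim: G => [|g G IHG] /=; first by rewrite size_poly0.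
apply: (leq_trans (size_scale_leq _ _)); apply: (leq_trans (size_polyD _ _)).
by rewrite size_polyXn geq_max leqnn (leq_trans IHG).
Qed.

Lemma horner_word_poly r s G : s != 0 ->
  (word_poly r G).[s] * s = s ^+ size G * word_coef r s G.
Proof.
move=> s0; elim: G => [|g G IHG] /=; first by rewrite horner0 mul0r mulr0.
by rewrite hornerZ hornerD hornerXn -mulrA mulrDl IHG exprS; field.
Qed.

Lemma word_poly_cons_eqZ r c g1 g2 H1 H2 : r != 0 -> size H1 = size H2 ->
  word_poly r (g1 :: H1) = c *: word_poly r (g2 :: H2) ->
  r ^ g1 = c * r ^ g2 /\ word_poly r H1 = word_poly r H2.
Proof.
move=> r0 eS /= eQ.
have lead : r ^ g1 = c * r ^ g2.
  move: (congr1 (fun p : {poly F} => p`_(size H1)) eQ).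
  rewrite !coefZ !coefD eS coefXn eqxx.
  by rewrite !nth_default ?size_word_poly -?eS ?size_word_poly // !addr0 !mulr1.
split=> //; move: eQ; rewrite scalerA -lead eS => /scalerI.
by rewrite expfz_neq0 // => /(_ isT) /addrI.
Qed.

End WordPoly.

Section WordPolyInj.
Context {R : numFieldType} (r : R).
Hypotheses (r_gt0 : 0 < r) (r_neq1 : r != 1).

Lemma exprz_inj : injective (exprz r).
Proof.
have r0 : r != 0 by rewrite gt_eqF.
move=> m n e; have : r ^ (m - n) == 1 by rewrite expfzDr // e -invr_expz divff ?expfz_neq0.
rewrite pexprz_eq1 ?ltW // (negbTE r_neq1) orbF subr_eq0.
by move/eqP.
Qed.

Lemma word_poly_inj G1 G2 : size G1 = size G2 ->
  word_poly r G1 = word_poly r G2 -> G1 = G2.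
Proof.
have r0 : r != 0 by rewrite gt_eqF.
elim: G1 G2 => [|g1 H1 IHH] [|g2 H2] // [eS].
rewrite -[word_poly r (g2 :: _)]scale1r => /(word_poly_cons_eqZ r0 eS) [eg eH].
by rewrite mul1r in eg; rewrite (exprz_inj eg) (IHH H2).
Qed.

Lemma word_poly_eqZ_halves (h : int) G1 G2 : size G1 = size G2 ->
  word_poly r G1 = r ^ (\sum_(g <- G1) g - h) *: word_poly r G2 ->
  \sum_(g <- G1) g + \sum_(g <- G2) g = h + h -> G1 = G2.
Proof.
have r0 : r != 0 by rewrite gt_eqF.
case: G1 G2 => [|g1 H1] [|g2 H2] // [eS] eQ.
have [eg /(word_poly_inj eS) eH] := word_poly_cons_eqZ r0 eS eQ.
move: eQ eg; rewrite {}eH !big_cons -expfzDr // => _ /exprz_inj.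
by move=> eg eh; congr (_ :: _); lia.
Qed.

End WordPolyInj.

Definition is_square (T : eqType) (s : seq T) : bool :=
  s == take (size s)./2 s ++ take (size s)./2 s.

Section ClosedField.
Context {C : numClosedFieldType}.

Lemma prim_root_exists n : (0 < n)%N -> {z : C | n.-primitive_root z}.
Proof.
pose p : {poly C} := 'X^n - 1; have [r Dp] := closed_field_poly_normal p.
move=> n_gt0; apply/sigW; rewrite (monicP _) ?monicXnsubC // scale1r in Dp.
have rn1 : all n.-unity_root r by apply/allP=> z; rewrite -root_prod_XsubC -Dp.
have sz_r : (n < (size r).+1)%N by rewrite -(size_prod_XsubC r id) -Dp size_XnsubC.
have [|z] := hasP (has_prim_root n_gt0 rn1 _ sz_r); last by exists z.
by rewrite -separable_prod_XsubC -Dp separable_Xn_sub_1 // pnatr_eq0 -lt0n.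
Qed.

Lemma exists_rootn_nonroot (p : {poly C}) n (c : C) :
  (0 < n)%N -> c != 0 -> p != 0 -> (size p <= n)%N ->
  exists2 s, s ^+ n = c & ~~ root p s.
Proof.
move=> n0 c0 p0 sp; have [z zP] := prim_root_exists n0.
pose c1 := n.-root c; have c10 : c1 != 0 by rewrite rootC_eq0.
pose rs := [seq c1 * z ^+ i | i <- iota 0 n].
have rs_uniq : uniq rs.
  rewrite map_inj_in_uniq ?iota_uniq // => i j; rewrite !mem_iota !add0n => ilt jlt.
  by move/(mulfI c10)/eqP; rewrite (eq_prim_root_expr zP) !modn_small // => /eqP.
have rs_rootn : {in rs, forall s, s ^+ n = c}.
  move=> _ /mapP [i _ ->]; rewrite exprMn rootCK // -exprM mulnC exprM.
  by rewrite (prim_expr_order zP) expr1n mulr1.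
have /allPn [s /rs_rootn sn nroot] : ~~ all (root p) rs.
  apply: contraL sp => /max_poly_roots /(_ rs_uniq); rewrite -ltnNge.
  by rewrite size_map size_iota; apply; rewrite p0.
by exists s.
Qed.

Definition uptri_witness (G : seq int) (lam al mu : C) : Prop :=
  [/\ al != 0, mu != 0, word_diag al mu G = lam & word_coef (al ^+ 2) (mu ^+ 2) G != 0].

Lemma uptri_witness_even G n (h : int) : (0 < n)%N -> size G = (n + n)%N ->
  \sum_(g <- G) g = h + h -> ~~ is_square G ->
  exists al mu, uptri_witness G (-1) al mu.
Proof.
move=> n0 sG sumG nsq.
pose al : C := 2%:R; have al0 : al != 0 by rewrite pnatr_eq0.
pose r := al ^+ 2; have r0 : r != 0 by rewrite expf_neq0.
have r_gt0 : 0 < r by rewrite /r /al -natrX ltr0n.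
have r_neq1 : r != 1 by rewrite /r /al -natrX pnatr_eq1.
pose G1 := take n G; pose G2 := drop n G.
have eG : G = G1 ++ G2 by rewrite cat_take_drop.
have s1 : size G1 = n by rewrite size_take sG; case: ifP => //; lia.
have s2 : size G2 = n by rewrite size_drop sG; lia.
pose D := word_poly r G1 - r ^ (\sum_(g <- G1) g - h) *: word_poly r G2.
have D0 : D != 0.
  apply: contraNneq nsq => /eqP; rewrite subr_eq0 => /eqP eD.
  have e12 : G1 = G2.
    by apply: (word_poly_eqZ_halves r_gt0 r_neq1 _ eD); rewrite ?s1 ?s2 // -big_cat -eG.
  by rewrite /is_square sG addnn doubleK -/G1 {1}eG e12.
have sD : (size D <= n)%N.
  rewrite (leq_trans (size_polyD _ _)) // size_polyN geq_max.
  by rewrite -{1}s1 size_word_poly (leq_trans (size_scale_leq _ _)) // -s2 size_word_poly.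
have [|s sn nroot] := exists_rootn_nonroot (n := n) (c := - r ^ h) n0 _ D0 sD.
  by rewrite oppr_eq0 expfz_neq0.
have s0 : s != 0.
  have sn0 : s ^+ n != 0 by rewrite sn oppr_eq0 expfz_neq0.
  by apply: contraNneq sn0 => ->; rewrite expf_eq0 n0 eqxx.
pose mu := sqrtC s; have mu2 : mu ^+ 2 = s by rewrite sqrtCK.
have mu0 : mu != 0 by rewrite sqrtC_eq0.
have sNn : s ^ (- n%:Z) = - (r ^ h)^-1 by rewrite -invr_expz -exprnP sn invrN.
exists al, mu; split=> //.
  rewrite /word_diag sumG sG PoszD opprD !exprz_double mu2 sNn -/r.
  by field; rewrite expfz_neq0.
rewrite mu2 -/r eG word_coef_cat // /word_diag s1 sNn.
apply: contra nroot => /eqP coef0.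
have hornerD_s : D.[s] * s = s ^+ n *
    (word_coef r s G1 + r ^ (\sum_(g <- G1) g) * - (r ^ h)^-1 * word_coef r s G2).
  rewrite hornerD hornerN hornerZ mulrDl mulNr -!mulrA !horner_word_poly // s1 s2.
  by rewrite expfzDr // -invr_expz; ring.
by rewrite /root -(mulIr_eq0 _ (mulIf s0)) hornerD_s coef0 mulr0.
Qed.

End ClosedField.

Lemma matrix22P (R : Type) (A B : 'M[R]_2) :
  A 0 0 = B 0 0 -> A 0 1 = B 0 1 -> A 1 0 = B 1 0 -> A 1 1 = B 1 1 -> A = B.
Proof.
have ord2 (i : 'I_2) : i = 0 \/ i = 1.
  by case: i => [[|[|//]] ?]; [left|right]; apply: val_inj.
move=> e00 e01 e10 e11; apply/matrixP => i j.
by case: (ord2 i) => ->; case: (ord2 j) => ->.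
Qed.

Section Triangularize.
Context {C : numClosedFieldType}.

Lemma SL2_trig_uptri (U : 'M[C]_2) : \det U = 1 -> is_trig_mx U^T ->
  exists2 lam, lam != 0 & U = uptri lam (U 0 1).
Proof.
move=> dU /is_trig_mxP trU; have U10 : U 1 0 = 0 by have := trU 0 1 isT; rewrite mxE.
have U00 : U 0 0 != 0.
  apply: contra_eq_neq dU; rewrite det_mx22 => ->.
  by rewrite U10 !mulr0 mul0r subr0 eq_sym oner_neq0.
exists (U 0 0) => //; apply: matrix22P; rewrite !mxE //=.
by apply: (mulfI U00); rewrite divff // -dU det_mx22 U10 mulr0 subr0.
Qed.

Lemma SL2_conj_uptri (M : 'M[C]_2) : \det M = 1 ->
  exists Q lam b, [/\ Q \is a GRing.unit, lam != 0 & M = Q * uptri lam b * Q^-1].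
Proof.
move=> dM; have [P /unitarymx_unit uP] := Schur M^T isT.
rewrite /similar_to /conjmx pinvmxE //; set U := (P *m M^T *m invmx P)^T => trU.
have uPt : P^T \in unitmx by rewrite unitmx_tr.
have eM : M = P^T *m U *m invmx P^T.
  rewrite /U !trmx_mul trmxK trmx_inv !mulmxA mulmxV // mul1mx mulmxK //.
have dU : \det U = 1.
  by rewrite /U det_tr !det_mulmx det_tr dM mulr1 -det_mulmx mulmxV // det1.
have [|lam lam0 eU] := SL2_trig_uptri dU; first by rewrite trmxK.
by exists P^T, lam, (U 0 1); rewrite -eU.
Qed.

End Triangularize.

Lemma int_halves (z : int) : exists h : int, z = h + h \/ z = h + h + 1.
Proof.
exists (z %/ 2)%Z; have := divz_eq z 2.
have : 0 <= (z %% 2)%Z by rewrite modz_ge0.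
have : (z %% 2)%Z < 2 by rewrite ltz_pmod.
lia.
Qed.

Section Image.
Context {C : numClosedFieldType}.

Lemma uptri_witness_sign G (lam : C) : G != [::] -> lam ^+ 2 = 1 ->
  (lam = -1 -> ~~ is_square G) -> exists al mu, uptri_witness G lam al mu.
Proof.
move=> G0 /eqP; rewrite sqrf_eq1 => /orP[] /eqP-> nsq.
  exists 1, 1; split; rewrite ?oner_neq0 //.
    by rewrite /word_diag !exp1rz mulr1.
  by rewrite expr1n word_coef11 pnatr_eq0 size_eq0.
have N1 : (-1 : C) != 0 by rewrite oppr_eq0 oner_neq0.
have sqrN1 : (-1 : C) ^+ 2 = 1 by rewrite sqrrN expr1n.
have coef11 : word_coef 1 (1 : C) G != 0 by rewrite word_coef11 pnatr_eq0 size_eq0.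
have [oddN|evenN] := boolP (odd (size G)).
  exists 1, (-1); split; rewrite ?oner_neq0 ?expr1n ?sqrN1 //.
  rewrite /word_diag exp1rz mul1r -invr_expz -exprnP -signr_odd oddN.
  by rewrite expr1 invrN invr1.
have [h [sumG|sumG]] := int_halves (\sum_(g <- G) g); last first.
  exists (-1), 1; split; rewrite ?oner_neq0 ?expr1n ?sqrN1 //.
  by rewrite /word_diag sumG exp1rz mulr1 expfzDr // exprz_double sqrN1 exp1rz mul1r.
have sizeG : size G = ((size G)./2 + (size G)./2)%N.
  by rewrite -{1}(odd_double_half (size G)) (negbTE evenN) add0n addnn.
apply: (uptri_witness_even _ sizeG sumG (nsq erefl)).
by move: G0; rewrite -size_eq0; lia.
Qed.


Definition word_image (G : seq int) (M : 'M[C]_2) : Prop :=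
  exists X Y, [/\ \det X = 1, \det Y = 1 & word_yinv G X Y = M].

Lemma word_image_conj G M Q : Q \is a GRing.unit ->
  word_image G M -> word_image G (Q * M * Q^-1).
Proof.
move=> uQ [X [Y [dX dY <-]]]; exists (Q * X * Q^-1), (Q * Y * Q^-1).
have det_conj Z : \det (Q * Z * Q^-1) = \det Z.
  by rewrite -!mulmxE !det_mulmx det_inv mulrAC divrr ?mul1r // -unitmxE.
by rewrite !det_conj word_yinv_conj // unitmxE ?dX ?dY unitr1.
Qed.

Lemma word_image_diag G lam : G != [::] -> lam != 0 -> word_image G (uptri lam 0).
Proof.
move=> G0 lam0; have N0 : (0 < size G)%N by rewrite lt0n size_eq0.
pose mu := ((size G).-root lam)^-1.
have mu0 : mu != 0 by rewrite invr_eq0 rootC_eq0.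
exists 1, (uptri mu 0); split; rewrite ?det1 ?det_uptri //.
rewrite -uptri10 word_yinv_uptri ?oner_neq0 // oppr0 !mul0r; congr (uptri _ _).
by rewrite /word_diag exp1rz mul1r /mu exprz_inv opprK -exprnP rootCK.
Qed.

Lemma word_image_witness G lam al mu b : uptri_witness G lam al mu ->
  word_image G (uptri lam b).
Proof.
move=> [al0 mu0 eD cf0]; have lam0 : lam != 0 by rewrite -eD word_diag_neq0.
pose y := - b * mu * lam / word_coef (al ^+ 2) (mu ^+ 2) G.
exists (uptri al 0), (uptri mu y); split; rewrite ?det_uptri //.
by rewrite word_yinv_uptri // eD; congr (uptri _ _); rewrite /y; field; rewrite cf0 mu0 lam0.
Qed.

Lemma word_image_uptri G lam b : G != [::] -> ~~ is_square G -> lam != 0 ->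
  word_image G (uptri lam b).
Proof.
move=> G0 nsq lam0; have [sq1|sqN1] := eqVneq (lam ^+ 2) 1.
  have [al [mu wit]] := uptri_witness_sign G0 sq1 (fun _ => nsq).
  exact: word_image_witness wit.
have d0 : lam^-1 - lam != 0.
  apply: contraNneq sqN1 => /eqP; rewrite subr_eq0 => /eqP e.
  by rewrite expr2 -{1}e mulVf.
pose z := b / (lam^-1 - lam).
have -> : uptri lam b = uptri 1 z * uptri lam 0 * (uptri 1 z)^-1.
  rewrite uptriV ?oner_neq0 // !uptriM invr1 !mul1r mulr1 add0r divr1.
  congr (uptri _ _); move: d0; rewrite /z; set d := _ - lam => d0.
  by rewrite mulrN -mulNr [- lam * _]mulrC -mulrDr addrC divfK.
exact: word_image_conj (uptri_unit _ (oner_neq0 _)) (word_image_diag G0 lam0).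
Qed.

Lemma word_image_SL2 G M : G != [::] -> ~~ is_square G -> \det M = 1 ->
  word_image G M.
Proof.
move=> G0 nsq /SL2_conj_uptri [Q [lam [b [uQ lam0 ->]]]].
exact: word_image_conj uQ (word_image_uptri b G0 nsq lam0).
Qed.

End Image.

Definition yinv_letters (G : seq int) : seq letter :=
  flatten [seq gen_pow false g ++ [:: (true, true)] | g <- G].

(* [y ^ b] with [b < 0] is [y^-1] followed by [|b| - 1] factors [x ^ 0 * y^-1]. *)
Definition yinv_exponents k (a b : 'I_k -> int) : seq int :=
  flatten [seq a i :: nseq `|b i|.-1 0 | i <- enum 'I_k].

Lemma yinv_letters_cat G1 G2 :
  yinv_letters (G1 ++ G2) = yinv_letters G1 ++ yinv_letters G2.
Proof. by rewrite /yinv_letters map_cat flatten_cat. Qed.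

Lemma yinv_letters_block (a b : int) : b < 0 ->
  yinv_letters (a :: nseq `|b|.-1 0) = gen_pow false a ++ gen_pow true b.
Proof.
case: b => // m _; rewrite /yinv_letters /= -catA; congr (_ ++ _).
rewrite /gen_pow (_ : Negz m < 0) //=; by elim: m => //= m [->].
Qed.

Lemma word_yinv_block (R : unitRingType) (a b : int) (X Y : R) : b < 0 ->
  word_yinv (a :: nseq `|b|.-1 0) X Y = X ^ a * Y ^ b.
Proof.
case: b => // m _; rewrite /word_yinv big_cons big_nseq -mulrA; congr (_ * _).
by rewrite /= expr0z mul1r iter_mulr_1 -exprS exprVn.
Qed.

Lemma word_of_yinv k (a b : 'I_k -> int) : (forall i, b i < 0) ->
  word_of a b = yinv_letters (yinv_exponents a b).
Proof.
move=> b_lt0; rewrite /yinv_exponents /word_of.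
elim: (enum 'I_k) => //= i s ->.
by rewrite -cat_cons yinv_letters_cat yinv_letters_block.
Qed.

Lemma word_map_yinv k (a b : 'I_k -> int) (X Y : 'M[CC]_2) : (forall i, b i < 0) ->
  word_map a b X Y = word_yinv (yinv_exponents a b) X Y.
Proof.
move=> b_lt0; rewrite /word_map /word_yinv /yinv_exponents big_flatten big_map enumT.
by apply: eq_bigr => i _; rewrite -/(word_yinv _ X Y) word_yinv_block.
Qed.

Lemma yinv_exponents_neq_nil k (a b : 'I_k -> int) : (0 < k)%N ->
  yinv_exponents a b != [::].
Proof.
case: k a b => // k a b _; rewrite /yinv_exponents.
by case: (enum _) (mem_enum 'I_k.+1 ord0) => //= i s _; rewrite -cat1s.
Qed.

Definition y_exponent (l : letter) : int := if l.1 then (-1) ^+ l.2 else 0.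

Definition y_exponent_sum (s : seq letter) : int := \sum_(l <- s) y_exponent l.

Lemma y_exponent_sum_reduce s : y_exponent_sum (reduce s) = y_exponent_sum s.
Proof.
rewrite /y_exponent_sum; elim: s => //= l s IHs.
case: (reduce s) IHs => [|l' s'] /=; rewrite ?big_cons ?big_nil => <- //.
case: ifP => [/andP [/eqP e1 e2]|]; rewrite ?big_cons //.
rewrite addrA; move: e1 e2; case: l => [y1 i1]; case: l' => [y2 i2] /= ->.
move=> ne; rewrite -[LHS]add0r; congr (_ + _); move: ne; rewrite /y_exponent.
by case: y1; case: i1; case: i2; rewrite //= ?addr0 ?expr1 ?expr0 ?addrN ?addNr.
Qed.

Lemma yinv_letters_nontrivial G : G != [::] -> ~ F2eq (yinv_letters G) [::].
Proof.
move=> G0 /(congr1 y_exponent_sum); rewrite y_exponent_sum_reduce /=.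
have -> : y_exponent_sum (yinv_letters G) = - (size G)%:Z.
  rewrite /y_exponent_sum /yinv_letters big_flatten big_map (eq_bigr (fun=> -1)).
    by rewrite big_const_seq count_predT iter_addr_0 mulNrn natz.
  by move=> g _; rewrite big_cat big_nseq big_seq1 /= iter_addr_0 mul0rn add0r.
by rewrite /y_exponent_sum big_nil; move: G0; rewrite -size_eq0; lia.
Qed.

Theorem corollary7p5 (k : nat) (a b : 'I_k -> int)
  (hk : (1 <= k)%N)
  (ha : forall i, a i != 0) (hb : forall i, b i != 0)
  (hneg : forall i, b i < 0) :
  (forall M : 'M[CC]_2, SL2 M ->
     exists X Y : 'M[CC]_2, SL2 X /\ SL2 Y /\ word_map a b X Y = M)
  \/
  (exists v : seq letter, ~ F2eq v [::] /\ F2eq (word_of a b) (v ++ v)).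
Proof.
have G0 := yinv_exponents_neq_nil a b hk; set G := yinv_exponents a b in G0.
have [sqG|nsqG] := boolP (is_square G).
  right; set h := take (size G)./2 G in sqG; exists (yinv_letters h); split.
    by apply: yinv_letters_nontrivial; apply: contraNneq G0 => h0; rewrite (eqP sqG) -/h h0.
  by rewrite /F2eq word_of_yinv // -/G (eqP sqG) yinv_letters_cat.
left => M /(word_image_SL2 G0 nsqG) [X [Y [dX dY eM]]].
by exists X, Y; rewrite word_map_yinv.
Qed.
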